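(* Let $\mathbb{F}$ be an algebraically closed field. If $\mathcal{A}\subseteq\mathbf{O}$ is a non-zero (not necessarily unital) subalgebra, then there exists $g\in{\rm G}_2$ such that $1_{\mathbf{O}}\in g\mathcal{A}$ or $\mathbf{u}_1\in g\mathcal{A}$ or $e_1\in g\mathcal{A}$. In particular, if $\mathrm{char}\,\mathbb{F}=2$ and $\mathcal{A}$ is a non-zero subalgebra of $\mathbf{O}$ not contained in $\mathbf{O}_0=\{a\in\mathbf{O}\mid\mathrm{tr}(a)=0\}$, then there exists $g\in{\rm G}_2$ such that $e_1\in g\mathcal{A}$.
   Context: The split octonion algebra $\mathbf{O}$ is the 8-dimensional $\mathbb{F}$-vector space of formal matrices $a=\begin{pmatrix}\alpha&\mathbf{u}\\ \mathbf{v}&\beta\end{pmatrix}$ with $\alpha,\beta\in\mathbb{F}$, $\mathbf{u},\mathbf{v}\in\mathbb{F}^3$, with multiplication $\begin{pmatrix}\alpha&\mathbf{u}\\ \mathbf{v}&\beta\end{pmatrix}\begin{pmatrix}\alpha'&\mathbf{u}'\\ \mathbf{v}'&\beta'\end{pmatrix}=\begin{pmatrix}\alpha\alpha'+\mathbf{u}\cdot\mathbf{v}'&\alpha\mathbf{u}'+\beta'\mathbf{u}-\mathbf{v}\times\mathbf{v}'\\ \alpha'\mathbf{v}+\beta\mathbf{v}'+\mathbf{u}\times\mathbf{u}'&\beta\beta'+\mathbf{v}\cdot\mathbf{u}'\end{pmatrix}$ (dot product and cross product on $\mathbb{F}^3$). Trace $\mathrm{tr}(a)=\alpha+\beta$.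 With $\mathbf{c}_1,\mathbf{c}_2,\mathbf{c}_3$ the standard basis of $\mathbb{F}^3$: $e_1$ has $\alpha=1$ and all else $0$, $e_2$ has $\beta=1$ and all else $0$, $\mathbf{u}_1$ has $\mathbf{u}=\mathbf{c}_1$ and all else $0$; $1_{\mathbf{O}}=e_1+e_2$. ${\rm G}_2=\mathrm{Aut}(\mathbf{O})$. *)

From HB Require Import structures.
From mathcomp Require Import all_boot all_algebra.
Set Implicit Arguments. Unset Strict Implicit. Unset Printing Implicit Defensive.
Import GRing.Theory.
Local Open Scope ring_scope.

Section Oct.
Variable F : fieldType.

Record vec3 := V3 { c1 : F; c2 : F; c3 : F }.

Definition vadd (x y : vec3) := V3 (c1 x + c1 y) (c2 x + c2 y) (c3 x + c3 y).
Definition vscale (k : F) (x : vec3) := V3 (k * c1 x) (k * c2 x) (k * c3 x).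
Definition vdot (x y : vec3) : F := c1 x * c1 y + c2 x * c2 y + c3 x * c3 y.
Definition vcross (x y : vec3) : vec3 :=
  V3 (c2 x * c3 y - c3 x * c2 y) (c3 x * c1 y - c1 x * c3 y) (c1 x * c2 y - c2 x * c1 y).
Definition vzero : vec3 := V3 0 0 0.

(* a = ( alpha  u ; v  beta ) *)
Record oct := Oct { oalpha : F; ou : vec3; ov : vec3; obeta : F }.

Definition oadd (a b : oct) :=
  Oct (oalpha a + oalpha b) (vadd (ou a) (ou b)) (vadd (ov a) (ov b)) (obeta a + obeta b).
Definition oscale (k : F) (a : oct) :=
  Oct (k * oalpha a) (vscale k (ou a)) (vscale k (ov a)) (k * obeta a).
Definition ozero : oct := Oct 0 vzero vzero 0.

Definition omul (a b : oct) : oct :=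
  Oct (oalpha a * oalpha b + vdot (ou a) (ov b))
      (vadd (vadd (vscale (oalpha a) (ou b)) (vscale (obeta b) (ou a)))
            (vscale (-1) (vcross (ov a) (ov b))))
      (vadd (vadd (vscale (oalpha b) (ov a)) (vscale (obeta a) (ov b)))
            (vcross (ou a) (ou b)))
      (obeta a * obeta b + vdot (ov a) (ou b)).

Definition otr (a : oct) : F := oalpha a + obeta a.

Definition oe1 : oct := Oct 1 vzero vzero 0.
Definition oe2 : oct := Oct 0 vzero vzero 1.
Definition ou1 : oct := Oct 0 (V3 1 0 0) vzero 0.
Definition oone : oct := Oct 1 vzero vzero 1.

Definition is_subalgebra (A : oct -> Prop) : Prop :=
  [/\ A ozero,
      (forall x y, A x -> A y -> A (oadd x y)),
      (forall k x, A x -> A (oscale k x)) &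
      (forall x y, A x -> A y -> A (omul x y))].

Definition is_G2 (g : oct -> oct) : Prop :=
  [/\ (forall x y, g (oadd x y) = oadd (g x) (g y)),
      (forall k x, g (oscale k x) = oscale k (g x)),
      (forall x y, g (omul x y) = omul (g x) (g y)) &
      bijective g].

Definition in_image (g : oct -> oct) (A : oct -> Prop) (y : oct) : Prop :=
  exists2 x, A x & g x = y.

End Oct.

From mathcomp Require Import all_boot all_algebra.
From mathcomp Require Import ring.
Set Implicit Arguments. Unset Strict Implicit. Unset Printing Implicit Defensive.
Import GRing.Theory.
Local Open Scope ring_scope.

(* Every octonion satisfies x^2 = tr(x) x - n(x) 1, where n is the norm.  Hence a
   subalgebra containing an element of non-zero norm contains 1.  Otherwise a
   non-zero x in A has n(x) = 0, and after scaling it is either an idempotent of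
   trace 1 (if tr x <> 0) or a non-zero nilpotent of trace 0.  Explicit unipotent
   automorphisms (shears) and the flip exchanging the two diagonal entries move
   any trace-1 idempotent to e1 and any non-zero nilpotent onto the line F u1.
   In characteristic 2, if tr x <> 0 <> n(x), then 1 is in A, and x / tr x + q 1 is
   a trace-1 idempotent as soon as q^2 + q + n(x) / tr(x)^2 = 0, a quadratic
   which is solvable over an algebraically closed field. *)

Ltac oct_unfold :=
  repeat match goal with
  | x : oct _ |- _ => destruct x
  | v : vec3 _ |- _ => destruct v
  end;
  rewrite /= ?/omul ?/oadd ?/oscale ?/otr /= ?/vadd ?/vscale ?/vdot ?/vcross ?/vzero /=;
  try (congr Oct; try congr V3).

Ltac oct_ring := oct_unfold; ring.

Section Octonions.
Variable F : fieldType.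

Definition onorm (x : oct F) : F := oalpha x * obeta x - vdot (ou x) (ov x).

Definition oct_u (w : vec3 F) : oct F := Oct 0 w (vzero F) 0.

Lemma omul_sq (x : oct F) :
  omul x x = oadd (oscale (otr x) x) (oscale (- onorm x) (oone F)).
Proof. rewrite /onorm; oct_ring. Qed.

Lemma oscale1 (x : oct F) : oscale 1 x = x.
Proof. oct_ring. Qed.

Lemma oscale0 (x : oct F) : oscale 0 x = ozero F.
Proof. rewrite /ozero; oct_ring. Qed.

Lemma oscaleA k l (x : oct F) : oscale k (oscale l x) = oscale (k * l) x.
Proof. oct_ring. Qed.

Lemma otrZ k (x : oct F) : otr (oscale k x) = k * otr x.
Proof. oct_ring. Qed.

Lemma onormZ k (x : oct F) : onorm (oscale k x) = k ^+ 2 * onorm x.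
Proof. rewrite /onorm; oct_ring. Qed.

Lemma G2_id : is_G2 (@id (oct F)).
Proof. by split=> //; exists id. Qed.

Lemma G2_comp (f g : oct F -> oct F) : is_G2 f -> is_G2 g -> is_G2 (f \o g).
Proof.
move=> [fD fZ fM fB] [gD gZ gM gB]; split=> [x y|k x|x y|] /=.
- by rewrite gD fD.
- by rewrite gZ fZ.
- by rewrite gM fM.
- exact: bij_comp.
Qed.

Lemma G2_neq0 (g : oct F -> oct F) x : is_G2 g -> x <> ozero F -> g x <> ozero F.
Proof.
move=> [_ gZ _ [h gK _]] x0 gx0; apply: x0.
have g0 : g (ozero F) = ozero F by rewrite -{1}(oscale0 (ozero F)) gZ oscale0.
by rewrite -[x]gK gx0 -g0 gK.
Qed.

(* Unipotent automorphisms: [lower_shear a] sends e1 to (1 0; a 0) and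
   [upper_shear b] sends e1 to (1 b; 0 0). *)
Definition lower_shear (a : vec3 F) (x : oct F) : oct F :=
  Oct (oalpha x - vdot a (ou x))
      (vadd (ou x) (vcross a (ov x)))
      (vadd (vadd (ov x) (vscale (oalpha x - obeta x) a)) (vscale (- vdot a (ou x)) a))
      (obeta x + vdot a (ou x)).

Definition upper_shear (b : vec3 F) (x : oct F) : oct F :=
  Oct (oalpha x - vdot b (ov x))
      (vadd (vadd (ou x) (vscale (oalpha x - obeta x) b)) (vscale (- vdot b (ov x)) b))
      (vadd (ov x) (vcross b (ou x)))
      (obeta x + vdot b (ov x)).

Definition oflip (x : oct F) : oct F :=
  Oct (obeta x) (vscale (-1) (ov x)) (vscale (-1) (ou x)) (oalpha x).

Lemma G2_lower_shear a : is_G2 (lower_shear a).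
Proof.
rewrite /lower_shear; split=> [x y|k x|x y|]; try oct_ring.
by exists (lower_shear (vscale (-1) a)) => x; rewrite /lower_shear; oct_ring.
Qed.

Lemma G2_upper_shear b : is_G2 (upper_shear b).
Proof.
rewrite /upper_shear; split=> [x y|k x|x y|]; try oct_ring.
by exists (upper_shear (vscale (-1) b)) => x; rewrite /upper_shear; oct_ring.
Qed.

Lemma G2_oflip : is_G2 oflip.
Proof.
rewrite /oflip; split=> [x y|k x|x y|]; try oct_ring.
by exists oflip => x; rewrite /oflip; oct_ring.
Qed.

Lemma otr_upper_shear b x : otr (upper_shear b x) = otr x.
Proof. rewrite /upper_shear; oct_ring. Qed.

Lemma onorm_upper_shear b x : onorm (upper_shear b x) = onorm x.
Proof. rewrite /onorm /upper_shear /=; oct_ring. Qed.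

Lemma otr_oflip x : otr (oflip x) = otr x.
Proof. rewrite /oflip; oct_ring. Qed.

Lemma onorm_oflip x : onorm (oflip x) = onorm x.
Proof. rewrite /onorm /oflip /=; oct_ring. Qed.

Definition line_conj (x y : oct F) :=
  exists2 g, is_G2 g & exists2 l : F, l != 0 & g x = oscale l y.

Lemma line_conj_G2 g x y : is_G2 g -> g x = y -> line_conj x y.
Proof. by move=> Gg gx; exists g => //; exists 1; rewrite ?oner_neq0 ?oscale1. Qed.

Lemma line_conj_trans x y z : line_conj x y -> line_conj y z -> line_conj x z.
Proof.
move=> [g Gg [l l0 gx]] [h Gh [m m0 hy]].
exists (h \o g); first exact: G2_comp.
exists (l * m); first by rewrite mulf_neq0.
by case: Gh => _ hZ _ _; rewrite /= gx hZ hy oscaleA.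
Qed.

Lemma vzero_or_vdot_neq0 w : w = vzero F \/ exists2 b, vdot b w != 0 & c1 b != 0.
Proof.
case: w => w1 w2 w3; rewrite /vdot /=.
have [w1_0|w1_neq0] := eqVneq w1 0; last first.
  by right; exists (V3 1 0 0); rewrite /= ?oner_neq0 // !(mul0r, mul1r, addr0).
have [w2_0|w2_neq0] := eqVneq w2 0; last first.
  by right; exists (V3 1 1 0); rewrite /= ?oner_neq0 // w1_0 !(mul0r, mul1r, mulr0, addr0, add0r).
have [w3_0|w3_neq0] := eqVneq w3 0; last first.
  by right; exists (V3 1 0 1); rewrite /= ?oner_neq0 // w1_0 w2_0 !(mul0r, mul1r, mulr0, addr0, add0r).
by left; rewrite w1_0 w2_0 w3_0.
Qed.

Lemma lower_shear_nilpotent x : otr x = 0 -> onorm x = 0 -> oalpha x != 0 ->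
  lower_shear (vscale (- (oalpha x)^-1) (ov x)) x = oct_u (ou x).
Proof.
case: x => al [u1 u2 u3] [v1 v2 v3] be; rewrite /otr /onorm /vdot /=.
move=> /eqP; rewrite addr_eq0 => /eqP -> nx a0.
have {}nx : u1 * v1 = - (be * be) - u2 * v2 - u3 * v3 by rewrite -[LHS]addr0 -nx; ring.
rewrite /lower_shear /oct_u; oct_unfold; field: nx => //.
Qed.

Lemma nilpotent_to_oct_u x : otr x = 0 -> onorm x = 0 ->
  exists2 g, is_G2 g & exists w, g x = oct_u w.
Proof.
have shear y : otr y = 0 -> onorm y = 0 -> oalpha y != 0 ->
    exists2 g, is_G2 g & exists w, g y = oct_u w.
  move=> ty ny ay; exists (lower_shear (vscale (- (oalpha y)^-1) (ov y))).
    exact: G2_lower_shear.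
  by exists (ou y); apply: lower_shear_nilpotent.
move=> tx nx; have [a0|] := eqVneq (oalpha x) 0; last exact: shear.
have [v0|[b bv _]] := vzero_or_vdot_neq0 (ov x).
  exists id; first exact: G2_id.
  exists (ou x); move: tx; rewrite /otr /oct_u a0 add0r -v0 => b0.
  by case: x a0 b0 {nx v0} => ? ? ? ? /= -> ->.
have [g Gg gy] : exists2 g, is_G2 g & exists w, g (upper_shear b x) = oct_u w.
  by apply: shear; rewrite ?otr_upper_shear ?onorm_upper_shear //= a0 sub0r oppr_eq0.
by exists (g \o upper_shear b); first exact: G2_comp (G2_upper_shear b).
Qed.

(* [oflip] then [upper_shear b] turn [oct_u w] into (s  s b; -w  -s) with
   s = b.w, and [lower_shear (w / s)] clears everything but the corner s b. *)
Lemma oct_u_line_conj b w : vdot b w != 0 -> line_conj (oct_u w) (oct_u b).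
Proof.
move=> bw; exists (lower_shear (vscale (vdot b w)^-1 w) \o upper_shear b \o oflip).
  exact: G2_comp (G2_comp (G2_lower_shear _) (G2_upper_shear _)) G2_oflip.
exists (vdot b w) => //; move: bw.
case: b w => [b1 b2 b3] [w1 w2 w3]; rewrite /vdot /= => bw.
by rewrite /lower_shear /upper_shear /oflip /oct_u; oct_unfold; field.
Qed.

Lemma oct_u_line_conj_u1 w : w <> vzero F -> line_conj (oct_u w) (ou1 F).
Proof.
case: (vzero_or_vdot_neq0 w) => // -[b bw b1] _.
apply: line_conj_trans (oct_u_line_conj bw) (oct_u_line_conj _).
by rewrite /vdot /= !(mul0r, mul1r, addr0).
Qed.

Lemma nilpotent_line_conj_u1 x : x <> ozero F -> otr x = 0 -> onorm x = 0 ->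
  line_conj x (ou1 F).
Proof.
move=> x0 tx nx; have [g Gg [w gx]] := nilpotent_to_oct_u tx nx.
apply: line_conj_trans (line_conj_G2 Gg gx) (oct_u_line_conj_u1 _) => w0.
by apply: G2_neq0 Gg x0 _; rewrite gx w0.
Qed.

Lemma shears_idempotent_e1 e : otr e = 1 -> onorm e = 0 -> oalpha e != 0 ->
  lower_shear (vscale (-1) (ov e)) (upper_shear (vscale (- (oalpha e)^-1) (ou e)) e) = oe1 F.
Proof.
case: e => al [u1 u2 u3] [v1 v2 v3] be; rewrite /otr /onorm /vdot /=.
move=> te ne a0; have be_def : be = 1 - al by rewrite -te; ring.
rewrite be_def in ne *.
have {}ne : u1 * v1 = al * (1 - al) - u2 * v2 - u3 * v3 by rewrite -[LHS]addr0 -ne; ring.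
rewrite /lower_shear /upper_shear /oe1; oct_unfold; field: ne => //.
Qed.

Lemma idempotent_to_e1 e : otr e = 1 -> onorm e = 0 -> exists2 g, is_G2 g & g e = oe1 F.
Proof.
have shear y : otr y = 1 -> onorm y = 0 -> oalpha y != 0 -> exists2 g, is_G2 g & g y = oe1 F.
  move=> ty ny ay.
  exists (lower_shear (vscale (-1) (ov y)) \o upper_shear (vscale (- (oalpha y)^-1) (ou y))).
    exact: G2_comp (G2_lower_shear _) (G2_upper_shear _).
  exact: shears_idempotent_e1.
move=> te ne; have [a0|] := eqVneq (oalpha e) 0; last exact: shear.
have [g Gg ge] : exists2 g, is_G2 g & g (oflip e) = oe1 F.
  apply: shear; rewrite ?otr_oflip ?onorm_oflip //.
  by move: te; rewrite /otr /= a0 add0r => ->; apply: oner_neq0.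
by exists (g \o oflip); first exact: G2_comp Gg G2_oflip.
Qed.

Lemma oone_of_sq x : onorm x != 0 ->
  oone F = oscale (onorm x)^-1 (oadd (oscale (otr x) x) (oscale (-1) (omul x x))).
Proof. by rewrite omul_sq; move: (onorm x) => n n0; rewrite /oone; oct_unfold; field. Qed.

Lemma trace1_norm0_shift x q : 2 \in [pchar F] -> otr x = 1 ->
  q ^+ 2 + q + onorm x = 0 ->
  otr (oadd x (oscale q (oone F))) = 1 /\ onorm (oadd x (oscale q (oone F))) = 0.
Proof.
move=> ch2 tx qx; split.
  have -> : otr (oadd x (oscale q (oone F))) = otr x + q *+ 2 by oct_ring.
  by rewrite mulrn_pchar // addr0.
have -> : onorm (oadd x (oscale q (oone F))) = onorm x + q * otr x + q ^+ 2.
  by rewrite /onorm; oct_ring.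
by rewrite tx -qx; ring.
Qed.

Section Subalgebra.
Variable A : oct F -> Prop.
Hypothesis hA : is_subalgebra A.

Lemma subalg_one x : A x -> onorm x != 0 -> A (oone F).
Proof.
case: hA => _ AD AZ AM Ax nx; rewrite (oone_of_sq nx).
exact: AZ (AD _ _ (AZ _ _ Ax) (AZ _ _ (AM _ _ Ax Ax))).
Qed.

Lemma subalg_conj_e1 x : A x -> otr x != 0 -> onorm x = 0 ->
  exists g, is_G2 g /\ in_image g A (oe1 F).
Proof.
case: hA => _ _ AZ _ Ax tx nx.
have [g Gg ge] : exists2 g, is_G2 g & g (oscale (otr x)^-1 x) = oe1 F.
  by apply: idempotent_to_e1; rewrite ?otrZ ?onormZ ?mulVf // nx mulr0.
by exists g; split=> //; exists (oscale (otr x)^-1 x); first exact: AZ.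
Qed.

Lemma subalg_conj_u1 x : A x -> x <> ozero F -> otr x = 0 -> onorm x = 0 ->
  exists g, is_G2 g /\ in_image g A (ou1 F).
Proof.
case: hA => _ _ AZ _ Ax x0 tx nx.
have [g Gg [l l0 gx]] := nilpotent_line_conj_u1 x0 tx nx.
exists g; split=> //; exists (oscale l^-1 x); first exact: AZ.
by case: Gg => _ gZ _ _; rewrite gZ gx oscaleA mulVf // oscale1.
Qed.

Lemma subalg_char2_conj_e1 x : 2 \in [pchar F] ->
  (forall c : F, exists q, q ^+ 2 + q + c = 0) ->
  A x -> otr x != 0 -> exists g, is_G2 g /\ in_image g A (oe1 F).
Proof.
move=> ch2 solve2 Ax tx.
have [nx0|nx] := eqVneq (onorm x) 0; first exact: subalg_conj_e1 Ax tx nx0.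
case: hA => _ AD AZ _; set y := oscale (otr x)^-1 x.
have ty : otr y = 1 by rewrite otrZ mulVf.
have [q qy] := solve2 (onorm y).
have [te ne] := trace1_norm0_shift ch2 ty qy.
apply: (@subalg_conj_e1 (oadd y (oscale q (oone F)))); rewrite ?te ?oner_neq0 //.
exact: AD _ _ (AZ _ _ Ax) (AZ _ _ (subalg_one Ax nx)).
Qed.

End Subalgebra.

End Octonions.

Lemma closed_solve_quadratic (F : closedFieldType) (c : F) :
  exists q, q ^+ 2 + q + c = 0.
Proof.
have [q qE] := @GRing.solve_monicpoly F 2 (nth 0 [:: - c; -1]) isT.
by exists q; move: qE; rewrite !big_ord_recl big_ord0 /= => ->; rewrite /bump /=; ring.
Qed.

Theorem lemma6p6 (F : closedFieldType) :
  (forall A : oct F -> Prop,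
     is_subalgebra A -> (exists2 x, A x & x <> ozero F) ->
     exists g, is_G2 g /\
       [\/ in_image g A (oone F), in_image g A (ou1 F) | in_image g A (oe1 F)]) /\
  (2%N \in [pchar F] ->
   forall A : oct F -> Prop,
     is_subalgebra A -> (exists2 x, A x & x <> ozero F) ->
     (exists2 x, A x & otr x != 0) ->
     exists g, is_G2 g /\ in_image g A (oe1 F)).
Proof.
split=> [A hA [x Ax x0]|ch2 A hA _ [x Ax tx]]; last first.
  exact: (subalg_char2_conj_e1 hA ch2 (@closed_solve_quadratic F) Ax tx).
have [nx0|nx] := eqVneq (onorm x) 0; last first.
  exists id; split; first exact: G2_id.
  by apply: Or31; exists (oone F); first exact: (subalg_one hA Ax nx).
have [tx0|tx] := eqVneq (otr x) 0.
  by have [g [Gg gA]] := subalg_conj_u1 hA Ax x0 tx0 nx0; exists g; split=> //; apply: Or32.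
by have [g [Gg gA]] := subalg_conj_e1 hA Ax tx nx0; exists g; split=> //; apply: Or33.
Qed.
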